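(* Let $\mathcal{W}=(A,\to,\mathbb{S},\mathsf{f}_{\mathtt{NF}},\mathsf{Aggr})$ be a wARS, let $a\in A$, let $\Psi\subseteq\Theta\subseteq\Phi(a)$, and let $n\le m$ be natural numbers. Then $$\mathbf{0}\preccurlyeq\bigsqcup\{[\![\mathfrak{T}|_{n'}]\!]\mid\mathfrak{T}\in\Psi,\ n'\le n\}\preccurlyeq\bigsqcup\{[\![\mathfrak{T}|_{m'}]\!]\mid\mathfrak{T}\in\Theta,\ m'\le m\}\preccurlyeq[\![a]\!].$$
   Context: A semiring $\mathbb{S}=(S,\oplus,\odot,\mathbf{0},\mathbf{1})$: $(S,\oplus,\mathbf{0})$ commutative monoid, $(S,\odot,\mathbf{1})$ monoid, $\odot$ distributes over $\oplus$, $\mathbf{0}$ annihilator. Natural order: $s\preccurlyeq t$ iff $s\oplus u=t$ for some $u$. A complete lattice semiring is one where $\preccurlyeq$ is antisymmetric and every subset $T\subseteq S$ has a least upper bound $\bigsqcup T$. Infinite sums/products are suprema of finite partial sums/products. $\mathrm{Seq}(X)$: non-empty finite or infinite sequences over $X$. An sARS is $(A,\to)$ with $\to\subseteq A\times\mathrm{Seq}(A)$; $\mathtt{NF}_\to$ is the set of $a$ with no $B$ such that $a\to B$. An $(A,\to)$-reduction tree (RT) is a labeled ordered tree whose nodes $v$ carry labels $a_v\in A$ and whose ordered child sequence $vE$ is either empty or satisfies $a_v\to[a_w\mid w\in vE]$. For an RT $\mathfrak{T}$ and $n\ge0$, $\mathfrak{T}|_n$ is the tree obtained by removing all nodes of depth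 $>n$. Aggregators: smallest set containing constants $s\in S$, variables $v_1,v_2,\dots$, and $\bigoplus F$, $\bigodot F$ for non-empty finite or infinite sequences $F$ of aggregators; they induce functions by substituting the $i$-th argument for $v_i$. A wARS $(A,\to,\mathbb{S},\mathsf{f}_{\mathtt{NF}},\mathsf{Aggr})$ consists of an sARS, a complete lattice semiring $\mathbb{S}$, a map $\mathsf{f}_{\mathtt{NF}}:\mathtt{NF}_\to\to S$, and for each $a\to B$ an aggregator $\mathsf{Aggr}_{a\to B}$ with variable indices $\le|B|$, viewed as a function $S^{|B|}\to S$. Weight of a finite-depth RT $\mathfrak{T}$ at node $v$: $\mathsf{f}_{\mathtt{NF}}(a_v)$ if $a_v\in\mathtt{NF}_\to$; $\mathbf{0}$ if $v$ is a leaf with $a_v\notin\mathtt{NF}_\to$; $\mathsf{Aggr}_{a_v\to B}[$weights of the children in order$]$ with $B=[a_w\mid w\in vE]$ otherwise; $[\![\mathfrak{T}]\!]$ is the weight at the root. $\Phi(a)$ is the set of all finite-depth RTs with root labeled $a$, and $[\![a]\!]=\bigsqcup\{[\![\mathfrak{T}]\!]\mid\mathfrak{T}\in\Phi(a)\}$. *)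

From Stdlib Require Import Arith List ClassicalEpsilon.
Import ListNotations.
Set Implicit Arguments.

Record clsemiring := CLSemiring {
  car :> Type;
  sadd : car -> car -> car;
  smul : car -> car -> car;
  szero : car;
  sone : car;
  saddA : forall x y z, sadd x (sadd y z) = sadd (sadd x y) z;
  saddC : forall x y, sadd x y = sadd y x;
  sadd0 : forall x, sadd szero x = x;
  smulA : forall x y z, smul x (smul y z) = smul (smul x y) z;
  smul1l : forall x, smul sone x = x;
  smul1r : forall x, smul x sone = x;
  smulDl : forall x y z, smul (sadd x y) z = sadd (smul x z) (smul y z);
  smulDr : forall x y z, smul x (sadd y z) = sadd (smul x y) (smul x z);
  smul0l : forall x, smul szero x = szero;
  smul0r : forall x, smul x szero = szero;
  snle_antisym : forall s t,
    (exists u, sadd s u = t) -> (exists u, sadd t u = s) -> s = t;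
  slub_ex : forall T : car -> Prop, exists l,
    (forall x, T x -> exists u, sadd x u = l) /\
    (forall b, (forall x, T x -> exists u, sadd x u = b) -> exists u, sadd l u = b)
}.

Arguments sadd {c} _ _.
Arguments smul {c} _ _.
Arguments szero {c}.
Arguments sone {c}.

Section Semiring.
Variable K : clsemiring.

Definition nle (s t : K) : Prop := exists u, sadd s u = t.

Definition is_lub (T : K -> Prop) (l : K) : Prop :=
  (forall x, T x -> nle x l) /\ (forall b, (forall x, T x -> nle x b) -> nle l b).

(* ⊔ T : the (unique, by antisymmetry) least upper bound of T *)
Definition bigsqcup (T : K -> Prop) : K :=
  proj1_sig (constructive_indefinite_description _ (slub_ex K T)).

End Semiring.

Arguments nle {K} _ _.
Arguments is_lub {K} _ _.
Arguments bigsqcup {K} _.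

Inductive Seq (X : Type) : Type :=
| SFin : X -> list X -> Seq X
| SInf : (nat -> X) -> Seq X.

Arguments SFin {X} _ _.
Arguments SInf {X} _.

Definition smap (X Y : Type) (f : X -> Y) (s : Seq X) : Seq Y :=
  match s with
  | SFin x l => SFin (f x) (map f l)
  | SInf g => SInf (fun n => f (g n))
  end.

(* 0-based access to the i-th element *)
Definition snth (X : Type) (s : Seq X) (i : nat) : option X :=
  match s with
  | SFin x l => nth_error (x :: l) i
  | SInf g => Some (g i)
  end.

Fixpoint lall (X : Type) (P : X -> Prop) (l : list X) : Prop :=
  match l with
  | [] => True
  | x :: l' => P x /\ lall P l'
  end.

Definition sall (X : Type) (P : X -> Prop) (s : Seq X) : Prop :=
  match s with
  | SFin x l => P x /\ lall P l
  | SInf g => forall n, P (g n)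
  end.

(* i (1-based) is a valid position, i.e. 1 <= i <= |s| *)
Definition sidx (X : Type) (s : Seq X) (i : nat) : Prop :=
  match s with
  | SFin _ l => 1 <= i <= S (length l)
  | SInf _ => 1 <= i
  end.

Section SumProd.
Variable K : clsemiring.

Fixpoint psum (f : nat -> K) (k : nat) : K :=
  match k with
  | 0 => f 0
  | S k' => sadd (psum f k') (f (S k'))
  end.

Fixpoint pprod (f : nat -> K) (k : nat) : K :=
  match k with
  | 0 => f 0
  | S k' => smul (pprod f k') (f (S k'))
  end.

Definition ssum (s : Seq K) : K :=
  match s with
  | SFin x l => fold_left (@sadd K) l x
  | SInf f => @bigsqcup K (fun y => exists k, y = psum f k)
  end.

Definition sprod (s : Seq K) : K :=
  match s with
  | SFin x l => fold_left (@smul K) l x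
  | SInf f => @bigsqcup K (fun y => exists k, y = pprod f k)
  end.

Inductive aggr : Type :=
| AConst : car K -> aggr
| AVar : nat -> aggr                  (* v_i, i >= 1 *)
| ASum : Seq aggr -> aggr
| AProd : Seq aggr -> aggr.

(* function induced by an aggregator: the i-th argument (1-based) of the
   argument sequence args is substituted for v_i *)
Fixpoint aeval (args : Seq K) (e : aggr) : K :=
  match e with
  | AConst s => s
  | AVar i => match i with
              | 0 => @szero K
              | S j => match snth args j with Some x => x | None => @szero K end
              end
  | ASum F => ssum (smap (aeval args) F)
  | AProd F => sprod (smap (aeval args) F)
  end.

Fixpoint avars_ok (P : nat -> Prop) (e : aggr) : Prop :=
  match e with
  | AConst _ => True
  | AVar i => P i
  | ASum F => sall (avars_ok P) F
  | AProd F => sall (avars_ok P) F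
  end.

End SumProd.

Arguments AConst {K} _.
Arguments AVar {K} _.
Arguments ASum {K} _.
Arguments AProd {K} _.

Record wARS (K : clsemiring) := WARS {
  wA : Type;
  wR : wA -> Seq wA -> Prop;
  wfNF : wA -> car K;                        (* f_NF (only used on NF) *)
  wAggr : wA -> Seq wA -> aggr K;
  wAggr_ok : forall a B, wR a B -> avars_ok (sidx B) (wAggr a B)
}.

Section Trees.
Variable K : clsemiring.
Variable W : wARS K.

Definition NF (a : wA W) : Prop := ~ exists B, wR W a B.

(* labeled ordered trees, children: None = leaf, Some B = non-empty
   finite or infinite sequence of subtrees; being an inductive type, every
   branch is finite (finite depth is required separately below) *)
Inductive tree : Type :=
| Node : wA W -> option (Seq tree) -> tree.

Definition label (t : tree) : wA W := match t with Node a _ => a end.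

Fixpoint is_RT (t : tree) : Prop :=
  match t with
  | Node a None => True
  | Node a (Some B) => wR W a (smap label B) /\ sall is_RT B
  end.

Fixpoint depth_le (t : tree) (d : nat) {struct t} : Prop :=
  match t with
  | Node _ None => True
  | Node _ (Some B) =>
      match d with
      | 0 => False
      | S d' => sall (fun c => depth_le c d') B
      end
  end.

Fixpoint trunc (n : nat) (t : tree) {struct t} : tree :=
  match t with
  | Node a None => Node a None
  | Node a (Some B) =>
      match n with
      | 0 => Node a None
      | S n' => Node a (Some (smap (trunc n') B))
      end
  end.

Definition isNF (a : wA W) : bool :=
  if excluded_middle_informative (NF a) then true else false.

Fixpoint weight (t : tree) : car K :=
  match t with
  | Node a None => if isNF a then wfNF W a else @szero K
  | Node a (Some B) =>
      if isNF a then wfNF W a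
      else aeval (smap weight B) (wAggr W a (smap label B))
  end.

Definition Phi (a : wA W) (t : tree) : Prop :=
  is_RT t /\ label t = a /\ exists d, depth_le t d.

Definition wsem (a : wA W) : car K :=
  @bigsqcup K (fun s => exists t, Phi a t /\ s = weight t).

End Trees.

Arguments NF {K W} _.
Arguments Node {K W} _ _.
Arguments label {K W} _.
Arguments is_RT {K W} _.
Arguments depth_le {K W} _ _.
Arguments trunc {K W} _ _.
Arguments weight {K W} _.
Arguments Phi {K W} _ _.
Arguments wsem {K W} _.

(* Truncating a tree of Φ(a) at any depth yields again a tree of Φ(a), so every weight in
   the middle suprema is among those whose supremum is [[a]]; the remaining inequalities
   are monotonicity of ⊔ under inclusion of the index sets and minimality of 0. *)
From Stdlib Require Import List ClassicalEpsilon Lia FunctionalExtensionality.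

Lemma nle0s (K : clsemiring) (s : K) : nle szero s.
Proof. exists s. apply sadd0. Qed.

Lemma bigsqcup_spec {K : clsemiring} (T : K -> Prop) : is_lub T (bigsqcup T).
Proof.
  unfold bigsqcup. destruct (constructive_indefinite_description _ _) as [l Hl].
  exact Hl.
Qed.

Lemma bigsqcup_mono (K : clsemiring) (T U : K -> Prop) :
  (forall x, T x -> U x) -> nle (bigsqcup T) (bigsqcup U).
Proof.
  intros TsubU.
  destruct (bigsqcup_spec T) as [_ least_T]. destruct (bigsqcup_spec U) as [ub_U _].
  apply least_T. intros x Tx. apply ub_U, TsubU, Tx.
Qed.

Section SeqLemmas.
Context {X Y Z : Type}.

Lemma smap_comp (f : X -> Y) (g : Y -> Z) (s : Seq X) :
  smap g (smap f s) = smap (fun x => g (f x)) s.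
Proof. destruct s; simpl; [rewrite map_map|]; reflexivity. Qed.

Lemma smap_ext (f g : X -> Y) (s : Seq X) :
  (forall x, f x = g x) -> smap f s = smap g s.
Proof.
  intros Efg. destruct s; simpl.
  - rewrite Efg. f_equal. apply map_ext, Efg.
  - f_equal. apply functional_extensionality. intros; apply Efg.
Qed.

Lemma lall_map (P : X -> Prop) (Q : Y -> Prop) (f : X -> Y) (l : list X) :
  (forall x, P x -> Q (f x)) -> lall P l -> lall Q (map f l).
Proof. intros PQ; induction l; simpl; intuition. Qed.

Lemma sall_smap (P : X -> Prop) (Q : Y -> Prop) (f : X -> Y) (s : Seq X) :
  (forall x, P x -> Q (f x)) -> sall P s -> sall Q (smap f s).
Proof. intros PQ; destruct s; simpl; intuition. eapply lall_map; eauto. Qed.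

Lemma lall_forall (P : X -> Prop) (l : list X) : (forall x, P x) -> lall P l.
Proof. intros HP; induction l; simpl; auto. Qed.

Lemma sall_forall (P : X -> Prop) (s : Seq X) : (forall x, P x) -> sall P s.
Proof. intros HP; destruct s; simpl; auto using lall_forall. Qed.

End SeqLemmas.

Section Truncation.
Variable K : clsemiring.
Variable W : wARS K.

Lemma label_trunc n (t : tree W) : label (trunc n t) = label t.
Proof. destruct t as [a [B|]]; destruct n; reflexivity. Qed.

Lemma RT_trunc n : forall t : tree W, is_RT t -> is_RT (trunc n t).
Proof.
  induction n; intros [a [B|]]; simpl; auto.
  intros [Hred HB]. split.
  - rewrite smap_comp, (smap_ext _ _ B (label_trunc n)). exact Hred.
  - eapply sall_smap; eauto.
Qed.

Lemma depth_le_trunc n : forall t : tree W, depth_le (trunc n t) n.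
Proof.
  induction n; intros [a [B|]]; simpl; auto.
  apply (sall_smap (fun _ => True)); auto. apply sall_forall; auto.
Qed.

Lemma Phi_trunc (a : wA W) n (t : tree W) : Phi a t -> Phi a (trunc n t).
Proof.
  intros (Ht & Hlabel & _). split; [|split].
  - apply RT_trunc, Ht.
  - rewrite label_trunc. exact Hlabel.
  - exists n. apply depth_le_trunc.
Qed.

End Truncation.

Theorem corollary36 (S : clsemiring) (W : wARS S) (a : wA W)
  (Psi Theta : tree W -> Prop)
  (HPsi : forall t, Psi t -> Theta t)
  (HTheta : forall t, Theta t -> Phi a t)
  (n m : nat) (Hnm : n <= m) :
  nle (@szero S)
      (bigsqcup (fun s => exists t n', Psi t /\ n' <= n /\ s = weight (trunc n' t)))
  /\
  nle (bigsqcup (fun s => exists t n', Psi t /\ n' <= n /\ s = weight (trunc n' t)))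
      (bigsqcup (fun s => exists t m', Theta t /\ m' <= m /\ s = weight (trunc m' t)))
  /\
  nle (bigsqcup (fun s => exists t m', Theta t /\ m' <= m /\ s = weight (trunc m' t)))
      (wsem a).
Proof.
  split; [apply nle0s | split]; apply bigsqcup_mono.
  - intros s (t & n' & Psi_t & Hn' & ->). exists t, n'. repeat split; auto. lia.
  - intros s (t & m' & Theta_t & _ & ->). exists (trunc m' t).
    split; [apply Phi_trunc, HTheta, Theta_t | reflexivity].
Qed.
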